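(* Let $G$ be a finite group having a unique minimal normal subgroup $N$, which is nonabelian, with $N=R_1\times\cdots\times R_k$ ($k\ge1$), each $R_i$ isomorphic to a nonabelian simple group $R$. Let $\theta\in\mathrm{Irr}(R)$ be nonlinear and extendible to $\mathrm{Aut}(R)$, and let $\varphi=\theta\times\cdots\times\theta\in\mathrm{Irr}(N)$ ($k$ factors, via the isomorphisms $R_i\cong R$). If $\chi\in\mathrm{Irr}(G)$ is an extension of $\varphi$ to $G$ and $\chi$ is an m.i character of $G$, then $\theta$ is an m.i character of $R$.
   Context: A nonlinear $\chi\in\mathrm{Irr}(X)$ is an m.i character of the group $X$ if there exist a proper subgroup $U<X$, $\lambda\in\mathrm{Irr}(U)$ and an integer $m\ge1$ with $\lambda^X=m\chi$. *)

From HB Require Import structures.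
From mathcomp Require Import all_boot all_order all_algebra all_fingroup all_solvable all_field all_character.
Set Implicit Arguments. Unset Strict Implicit. Unset Printing Implicit Defensive.
Import Order.TTheory GRing.Theory Num.Theory.
Local Open Scope ring_scope.

Definition mi_char (gT : finGroupType) (X : {group gT}) (chi : 'CF(X)) : Prop :=
  [/\ chi \in irr X, ~~ (chi \is a linear_char) &
   exists U : {group gT}, U \proper X /\
     exists2 lambda : 'CF(U), lambda \in irr U &
       exists2 m : nat, (0 < m)%N & 'Ind[X] lambda = m%:R *: chi].

(* theta in Irr(R) is extendible to Aut(R), where R is identified with
   Inn(R) <= Aut(R) via x |-> conjugation by x. *)
Definition ext_to_Aut (rT : finGroupType) (R : {group rT}) (theta : 'CF(R)) : Prop :=
  exists2 psi : 'CF([group of Aut R]), psi \in irr [group of Aut R] &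
    forall x, x \in R -> psi (conj_aut R x) = theta x.

From HB Require Import structures.
From mathcomp Require Import all_boot all_order all_algebra all_fingroup all_solvable all_field all_character.
Import GRing.Theory Num.Theory.
Local Open Scope ring_scope.

(* If lambda^G = m chi with U < G, then N is not contained in U: otherwise
   Res_U chi would be irreducible (it lies over the irreducible phi = Res_N chi)
   and Frobenius reciprocity would force m = 1 and U = G.  Since N is normal,
   Mackey's formula for U acting on N shows that Res_N (lambda^G) = m phi
   contains Ind_N^(N cap U) of every constituent of Res_(N cap U) lambda, so
   some such constituent induces to a multiple of phi.  Repeating the argument
   inside N with a factor R_i not contained in the new proper subgroup, on
   which phi restricts to a multiple of theta, gives a proper subgroup of R_i
   inducing a multiple of theta, which is then transported along R_i ~ R. *)

Section InducedCharacters.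
Local Set Implicit Arguments.
Local Unset Strict Implicit.

Variable gT : finGroupType.
Implicit Types G H K L N U V : {group gT}.

Lemma card_mulg_fiber K U y : y \in (K * U)%g ->
  #|[pred p : gT * gT | [&& p.1 \in K, p.2 \in U & p.1 * p.2 == y]%g]| =
  #|K :&: U|.
Proof.
case/mulsgP=> n0 u0 Kn0 Uu0 ->.
rewrite -(card_imset (mem (K :&: U)) (f := fun w => (n0 * w, w^-1 * u0)%g));
  last by move=> w1 w2 [] /mulgI.
apply: eq_card => -[n u] /=; rewrite inE /=.
apply/idP/imsetP => [/and3P[Kn Uu /eqP e] | [w /setIP[Kw Uw] [-> ->]]].
  have ew : (n0^-1 * n = u0 * u^-1)%g by rewrite (canRL (mulgK u) e) -mulgA mulKg.
  exists (n0^-1 * n)%g; first by rewrite inE groupM ?groupV //= ew groupM ?groupV.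
  by rewrite mulKVg ew invMg invgK mulgKV.
by rewrite !groupM ?groupV //= mulgA -(mulgA n0) mulgV mulg1 eqxx.
Qed.

Lemma sum_mulg (V : nmodType) K U (g : gT -> V) :
  \sum_(n in K) \sum_(u in U) g (n * u)%g =
  (\sum_(y in (K * U)%g) g y) *+ #|K :&: U|.
Proof.
rewrite pair_big_dep /= (partition_big (fun p => p.1 * p.2)%g (mem (K * U)%g));
  last by move=> [n u] /andP[Kn Uu]; apply: mem_mulg.
rewrite -sumrMnl; apply: eq_bigr => y KUy.
rewrite (eq_bigr (fun _ => g y)); last by move=> p /andP[_ /eqP->].
rewrite sumr_const -(card_mulg_fiber KUy); congr (_ *+ _).
by apply: eq_card => p; rewrite !inE andbA.
Qed.

Lemma cfRes_Ind_join K U (lambda : 'CF(U)) : U \subset 'N(K)%g ->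
  'Res[K] ('Ind[K <*> U] lambda) = 'Ind[K] ('Res[K :&: U] lambda).
Proof.
move=> nKU; apply/cfun_inP => x Kx.
rewrite cfResE ?joing_subl // !cfIndE ?joing_subr ?subsetIl //.
have -> : gval (K <*> U)%G = (K * U)%g := norm_joinEr nKU.
have -> : \sum_(n in K) ('Res[K :&: U] lambda) (x ^ n)%g =
          \sum_(n in K) lambda (x ^ n)%g.
  apply: eq_bigr => n Kn; have Kxn : (x ^ n)%g \in K by rewrite groupJ.
  have [Uxn | notUxn] := boolP ((x ^ n)%g \in U).
    by rewrite cfResE ?subsetIr // inE Kxn.
  by rewrite !cfun0 // inE negb_and notUxn orbT.
have sum_conj_U n : \sum_(u in U) lambda (x ^ (n * u))%g = lambda (x ^ n)%g *+ #|U|.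
  by rewrite -sumr_const; apply: eq_bigr => u Uu; rewrite conjgM (cfunJ _ _ Uu).
have := sum_mulg K U (fun y => lambda (x ^ y)%g).
rewrite (eq_bigr _ (fun n _ => sum_conj_U n)) sumrMnl.
rewrite -[_ *+ #|U|]mulr_natr -[_ *+ #|K :&: U|]mulr_natr => eq_sums.
apply: (canLR (mulKf (neq0CG U))); rewrite mulrCA [_ * \sum_(n in K) _]mulrC eq_sums.
by rewrite [_ * (_ * _)]mulrC mulfK ?neq0CG.
Qed.

Lemma cfRes_Ind_sub_char L H (xi : 'CF(L)) : L \subset H ->
  xi \is a character -> 'Res[L] ('Ind[H] xi) - xi \is a character.
Proof.
move=> sLH Nxi.
have -> : 'Res[L] ('Ind[H] xi) - xi =
         \sum_i '[xi, 'chi_i] *: ('Res[L] ('Ind[H] 'chi_i) - 'chi_i).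
  rewrite (eq_bigr _ (fun i _ => scalerBr _ _ _)) sumrB -cfun_sum_cfdot.
  congr (_ - _); rewrite {1}[xi]cfun_sum_cfdot !linear_sum.
  by apply: eq_bigr => i _; rewrite !linearZ.
apply: rpred_sum => i _; apply: rpredZ_nat; first by rewrite Cnat_cfdot_char ?irr_char.
have NRI := cfRes_char L (cfInd_char H (irr_char i)).
have iRI : i \in irr_constt ('Res[L] ('Ind[H] 'chi_i)).
  by rewrite inE /= cfdot_Res_l cfnorm_eq0 Ind_irr_neq0.
by have /(constt_charP _ NRI)[c Nc ->] := iRI; rewrite addrC addKr.
Qed.

Section HomogeneousRestriction.

Variables (H K U : {group gT}) (beta : 'CF(K)) (a : algC).
Hypotheses (nsKH : (K <| H)%g) (sUH : U \subset H) (irr_beta : beta \in irr K).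

Lemma cfInd_constt_Res_homog (lambda : 'CF(U)) :
  lambda \is a character -> 'Res[K] ('Ind[H] lambda) = a *: beta ->
  forall j, j \in irr_constt ('Res[K :&: U] lambda) ->
  'Ind[K] 'chi[K :&: U]_j = '['Ind[K] 'chi_j, beta] *: beta.
Proof.
move=> Nlambda resInd j j_constt; have /irrP[i0 def_beta] := irr_beta.
have [sKH nKH] := andP nsKH; have nKU := subset_trans sUH nKH.
have sKUH : (K <*> U \subset H)%g by rewrite join_subG sKH.
set xi := 'Ind[K <*> U] lambda.
have /(constt_charP _ (cfRes_char (K :&: U) Nlambda))[c Nc def_lambda] := j_constt.
(* Three characters summing to a multiple of beta, so each is one. *)
have decomp : 'Res[K] ('Ind[H] lambda) = 'Ind[K] 'chi_j + 'Ind[K] c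
                + 'Res[K] ('Res[K <*> U] ('Ind[H] xi) - xi).
  rewrite linearB /= cfResRes ?joing_subl // /xi cfRes_Ind_join // def_lambda.
  by rewrite linearD /= (cfIndInd _ sKUH (joing_subr K U)) addrC subrK.
have Nrest := cfRes_char K (cfRes_Ind_sub_char sKUH (cfInd_char _ Nlambda)).
have NIc : 'Ind[K] c \is a character := cfInd_char _ Nc.
have NIj : 'Ind[K] 'chi[K :&: U]_j \is a character := cfInd_char _ (irr_char j).
have other_constt i : i != i0 -> '['Ind[K] 'chi_j, 'chi_i] = 0.
  move=> i'0; have := congr1 (cfdotr 'chi_i) decomp; rewrite /= resInd def_beta.
  rewrite cfdotZl cfdot_irr eq_sym (negbTE i'0) mulr0 !cfdotDl.
  move/esym/eqP; rewrite -addrA paddr_eq0 ?natr_ge0 ?Cnat_cfdot_char ?irr_char //.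
    by case/andP=> /eqP.
  by rewrite rpredD ?Cnat_cfdot_char ?irr_char.
rewrite {1}[LHS]cfun_sum_cfdot (bigD1 i0) //= big1 ?addr0 ?def_beta // => i i'0.
by rewrite other_constt ?scale0r.
Qed.

Lemma cfInd_Res_multiple (lambda : 'CF(U)) :
  lambda \in irr U -> 'Res[K] ('Ind[H] lambda) = a *: beta ->
  exists j : Iirr (K :&: U),
    exists2 n : nat, (0 < n)%N & 'Ind[K] 'chi_j = n%:R *: beta.
Proof.
move=> /irrP[l ->] resInd.
have /neq0_has_constt[j j_constt] := Res_irr_neq0 (K :&: U) l.
have def_Ind := cfInd_constt_Res_homog (irr_char l) resInd j_constt.
have /natrP[n def_n] : '['Ind[K] 'chi[K :&: U]_j, beta] \in Num.nat.
  by rewrite Cnat_cfdot_char ?cfInd_char ?irr_char ?irrWchar.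
exists j, n; last by rewrite def_Ind def_n.
rewrite lt0n; apply: contraNneq (Ind_irr_neq0 j (subsetIl K U)) => n0.
by rewrite def_Ind def_n n0 scale0r.
Qed.

End HomogeneousRestriction.

Lemma bigdprod_not_subset (I : finType) (P : pred I) (A : I -> {group gT}) N V :
    (\big[dprod/1%g]_(i | P i) A i)%g = N -> ~~ (N \subset V) ->
  exists2 i, P i & ~~ (A i \subset V).
Proof.
move=> defN not_sNV; apply/exists_inP.
apply: contraNT not_sNV => /exists_inPn all_sub.
rewrite -(bigdprodWY defN) gen_subG; apply/bigcupsP => i Pi.
exact/negPn/all_sub.
Qed.

Lemma cfBigdprod_Res_scale (I : finType) (P : pred I) (A : I -> {group gT}) G
    (defG : (\big[dprod/1%g]_(i | P i) A i)%g = G) (phi : forall i, 'CF(A i)) i :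
    cfBigdprod defG phi 1%g != 0 -> P i ->
  exists c, 'Res[A i] (cfBigdprod defG phi) = c *: phi i.
Proof.
move=> Phi1_neq0 Pi; have [] := cfBigdprodK (i := i) Phi1_neq0 Pi.
move: (_ / _) => a a_neq0 res_a.
by exists a^-1; rewrite -res_a scalerA mulVf ?scale1r.
Qed.

Lemma cfRes_irr_neq1_sub G N chi :
  chi \in irr G -> 'Res[N] chi \in irr N -> 'Res[N] chi != 1 -> N \subset G.
Proof.
move=> irr_chi irr_res; apply: contraR => not_sNG.
have chi1_neq0 : chi 1%g != 0 by have /irrP[i ->] := irr_chi; apply: irr1_neq0.
have /irrP[i def_res] := irr_res.
have res_dot1 : '['Res[N] chi, 'chi_0] = chi 1%g.
  by rewrite cfResEout // irr0 cfdotZl cfnorm1 mulr1.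
have i0 : i = 0.
  apply/eqP; apply: contraNT chi1_neq0 => /negPf i'0.
  by rewrite -res_dot1 def_res cfdot_irr i'0.
by rewrite def_res i0 irr0.
Qed.

Lemma cfInd_multiple_Res_irr_sub G N U chi (lambda : 'CF(U)) m :
    N \subset U -> U \subset G -> chi \in irr G -> 'Res[N] chi \in irr N ->
    lambda \in irr U -> (0 < m)%N -> 'Ind[G] lambda = m%:R *: chi ->
  G \subset U.
Proof.
move=> sNU sUG irr_chi irr_res /irrP[l ->] m_gt0 IndL.
have /irrP[p def_res] : 'Res[U] chi \in irr U.
  by apply: (cfRes_irr_irr (H := N)); rewrite ?cfRes_char ?irrWchar ?cfResRes.
have dotL : '['Ind[G] 'chi_l, chi] = m%:R by rewrite IndL cfdotZl irrWnorm // mulr1.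
rewrite -Frobenius_reciprocity def_res cfdot_irr in dotL.
case: (eqVneq l p) dotL => [elp | _] /eqP; rewrite eqr_nat eq_sym;
  last by rewrite gtn_eqF.
move=> /eqP m1; rewrite elp -def_res {}m1 in IndL.
have := congr1 (fun xi : 'CF(G) => xi 1%g) IndL; rewrite /= cfInd1 // cfRes1.
rewrite scale1r -[RHS]mul1r => /(mulIf _)/eqP.
rewrite pnatr_eq1 indexg_eq1; apply.
by have /irrP[i ->] := irr_chi; apply: irr1_neq0.
Qed.

End InducedCharacters.

Section MultipleOfInduced.
Local Set Implicit Arguments.
Local Unset Strict Implicit.

Definition multiple_of_induced (gT : finGroupType) (X : {group gT}) (chi : 'CF(X)) :=
  exists U : {group gT}, U \proper X /\
    exists2 lambda : 'CF(U), lambda \in irr U &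
      exists2 m : nat, (0 < m)%N & 'Ind[X] lambda = m%:R *: chi.

Variable gT : finGroupType.
Implicit Types H K U : {group gT}.

Lemma multiple_of_induced_Res H K U (lambda : 'CF(U)) (beta : 'CF(K)) a :
    (K <| H)%g -> U \subset H -> ~~ (K \subset U) ->
    lambda \in irr U -> beta \in irr K -> 'Res[K] ('Ind[H] lambda) = a *: beta ->
  multiple_of_induced beta.
Proof.
move=> nsKH sUH not_sKU irr_lambda irr_beta resInd.
have [j [n n_gt0 IndJ]] := cfInd_Res_multiple nsKH sUH irr_beta irr_lambda resInd.
exists (K :&: U)%G; split; first by rewrite properE subsetIl subsetI subxx.
by exists 'chi_j; [apply: mem_irr | exists n].
Qed.

Lemma multiple_of_induced_isom (rT : finGroupType) (R : {group rT}) (S : {group gT})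
    (f : {morphism R >-> gT}) (isoRS : isom R S f) (theta : 'CF(R)) :
  multiple_of_induced (cfIsom isoRS theta) -> multiple_of_induced theta.
Proof.
case=> V [ltVS [nu irr_nu [n n_gt0 IndNu]]]; have sVS := proper_sub ltVS.
pose isoSR := isom_sym isoRS; have [injg img] := isomP isoSR.
have isoV := restr_isom sVS isoSR.
exists (isom_inv isoRS @* V)%G; split.
  by have := injm_proper injg sVS (subxx S); rewrite img ltVS => ->.
exists (cfIsom isoV nu); first by rewrite cfIsom_irr.
exists n => //; rewrite (cfIndIsom isoSR isoV (fun x _ => erefl) sVS) IndNu.
by rewrite linearZ /= cfIsomK.
Qed.

End MultipleOfInduced.

Theorem lemma2p4 (gT rT : finGroupType) (G N : {group gT}) (k : nat)
  (Rs : 'I_k -> {group gT}) (R : {group rT})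
  (f : forall i : 'I_k, {morphism R >-> gT})
  (isoR : forall i : 'I_k, isom R (Rs i) (f i))
  (defN : (\big[dprod/1%g]_(i < k) Rs i)%g = N)
  (theta : 'CF(R)) (chi : 'CF(G)) :
  minnormal N G ->
  (forall M : {group gT}, minnormal M G -> M = N) ->
  ~~ abelian N ->
  (0 < k)%N ->
  simple R -> ~~ abelian R ->
  theta \in irr R -> ~~ (theta \is a linear_char) ->
  ext_to_Aut theta ->
  chi \in irr G ->
  'Res[N] chi = cfBigdprod defN (fun i => cfIsom (isoR i) theta) ->
  mi_char chi ->
  mi_char theta.
Proof.
move=> minN _ _ k_gt0 _ _ irr_theta nlin_theta _ irr_chi res_chi
  [_ _ [U [ltUG [lambda irr_lambda [m m_gt0 IndL]]]]].
set phi := cfBigdprod defN _ in res_chi.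
have irr_phi : phi \in irr N by apply: cfBigdprod_irr => i _; rewrite cfIsom_irr.
have phi_neq1 : phi != 1.
  rewrite cfBigdprod_eq1 => [|i _]; last by rewrite cfIsom_char irrWchar.
  apply: contra nlin_theta => /forallP/(_ (Ordinal k_gt0)).
  by rewrite cfIsom_eq1 => /eqP->; apply: cfun1_lin_char.
(* [minnormal N G] does not include N \subset G. *)
have sNG : N \subset G by apply: cfRes_irr_neq1_sub irr_chi _ _; rewrite res_chi.
have nsNG : (N <| G)%g by rewrite /normal sNG; case/mingroupP: minN => /andP[].
have not_sNU : ~~ (N \subset U).
  apply: contra (proper_subn ltUG) => sNU; rewrite -res_chi in irr_phi.
  exact: cfInd_multiple_Res_irr_sub sNU (proper_sub ltUG) irr_chi irr_phi
                                    irr_lambda m_gt0 IndL.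
have [U1 [ltU1N [mu irr_mu [n _ IndMu]]]] : multiple_of_induced phi.
  apply: multiple_of_induced_Res nsNG (proper_sub ltUG) not_sNU irr_lambda irr_phi _.
  by rewrite IndL linearZ /= res_chi.
have [i _ not_sRU1] := bigdprod_not_subset defN (proper_subn ltU1N).
have nsRN : (Rs i <| N)%g by have := defN; rewrite (bigD1 i) //= => /dprod_normal2[].
have phi1_neq0 : phi 1%g != 0 by have /irrP[j ->] := irr_phi; apply: irr1_neq0.
have [c res_phi] := cfBigdprod_Res_scale (i := i) phi1_neq0 isT.
split=> //; apply: (multiple_of_induced_isom (isoRS := isoR i)).
apply: multiple_of_induced_Res nsRN (proper_sub ltU1N) not_sRU1 irr_mu _ _.
  by rewrite cfIsom_irr.
by rewrite IndMu linearZ /= res_phi scalerA.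
Qed.
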